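(* A set $\mathbf D$ of tilings is a closed Condorcet super-domain if and only if it is a median super-domain, i.e. for any $T_1,T_2,T_3\in\mathbf D$ the set $(T_1\cap T_2)\cup(T_2\cap T_3)\cup(T_1\cap T_3)$ belongs to $\mathbf D$.
   Context: Fix an integer $n\ge 3$ and write $[n]=\{1,\dots,n\}$. Let $\Lambda$ be the set of 3-element subsets of $[n]$; a triple $\{i,j,k\}$ with $i<j<k$ is written $ijk$. For a 4-element subset $F=\{i<j<k<l\}$ of $[n]$, the stick of $F$ is the sequence $(ijk,\ ijl,\ ikl,\ jkl)$. A tiling (the inversion set of a rhombus tiling of the zonogon $Z(n;2)$) is a subset $T\subseteq\Lambda$ such that for every 4-element $F\subseteq[n]$, $T\cap\mathrm{stick}(F)$ is an initial segment or a final segment of the stick (empty set and whole stick allowed). For a finite set $V$ of odd cardinality and tilings $(T_v)_{v\in V}$, $sm((T_v)_{v\in V})$ is the set of triples lying in $T_v$ for more than $|V|/2$ indices $v$. A set $\mathbf D$ of tilings is a Condorcet super-domain if for every finite $V$ of odd cardinality and every family $(T_v)_{v\in V}$ with all $T_v\in\mathbf D$, $sm((T_v)_{v\in V})$ is a tiling; it is closed if moreover $sm((T_v)_{v\in V})\in\mathbf D$ for all such $V$ and families. *)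

From mathcomp Require Import all_boot.
Set Implicit Arguments. Unset Strict Implicit. Unset Printing Implicit Defensive.

(* [n] is modelled by 'I_n (elements 0..n-1, with the natural order).
   A triple ijk is the 3-element set [set i; j; k] : {set 'I_n}.
   A set of triples is an element of {set {set 'I_n}}. *)

Definition triples (n : nat) : {set {set 'I_n}} := [set A : {set 'I_n} | #|A| == 3].

Definition stick n (i j k l : 'I_n) : seq {set 'I_n} :=
  [:: [set i; j; k]; [set i; j; l]; [set i; k; l]; [set j; k; l]].

Definition init_or_final (b : seq bool) : Prop :=
  exists m, m <= 4 /\
    (b = nseq m true ++ nseq (4 - m) false \/
     b = nseq m false ++ nseq (4 - m) true).

Definition tiling n (T : {set {set 'I_n}}) : Prop :=
  T \subset triples n /\
  forall i j k l : 'I_n, i < j -> j < k -> k < l ->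
    init_or_final [seq (A \in T) | A <- stick i j k l].

Definition sm n (V : finType) (T : V -> {set {set 'I_n}}) : {set {set 'I_n}} :=
  [set A : {set 'I_n} in triples n | #|V| < 2 * #|[set v | A \in T v]|].

Definition condorcet_superdomain n (D : {set {set {set 'I_n}}}) : Prop :=
  forall (V : finType) (T : V -> {set {set 'I_n}}),
    odd #|V| -> (forall v, T v \in D) -> tiling (sm T).

Definition closed_condorcet_superdomain n (D : {set {set {set 'I_n}}}) : Prop :=
  condorcet_superdomain D /\
  forall (V : finType) (T : V -> {set {set 'I_n}}),
    odd #|V| -> (forall v, T v \in D) -> sm T \in D.

Definition median_superdomain n (D : {set {set {set 'I_n}}}) : Prop :=
  forall T1 T2 T3, T1 \in D -> T2 \in D -> T3 \in D ->
    (T1 :&: T2) :|: (T2 :&: T3) :|: (T1 :&: T3) \in D.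

(* For an odd electorate, on every coordinate more than half of
   the voters agree with the majority, so any two coordinates are matched by a
   single voter. If y1, y2, y3 in D agree with the majority on the lists
   b :: c :: s, a :: c :: s and a :: b :: s, then every coordinate of
   a :: b :: c :: s is correct in at least two of them, hence in their median;
   so a median-closed D contains a set agreeing with the majority on all
   coordinates. Conversely the majority of three sets is their median. Since
   tilings are sets of triples, sm is the plain majority. *)

From mathcomp Require Import all_boot zify.

Set Implicit Arguments.
Unset Strict Implicit.
Unset Printing Implicit Defensive.

Section Majority.

Variable T : finType.

Definition median (A B C : {set T}) : {set T} :=
  (A :&: B) :|: (B :&: C) :|: (A :&: C).

Definition median_closed (D : {set {set T}}) : Prop :=
  forall A B C, A \in D -> B \in D -> C \in D -> median A B C \in D.

Definition majority (V : finType) (X : V -> {set T}) : {set T} :=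
  [set e | #|V| < 2 * #|[set v | e \in X v]|].

Lemma median_rotate (A B C : {set T}) : median A B C = median B C A.
Proof.
by apply/setP => e; rewrite !inE; case: (e \in A) (e \in B) (e \in C) => [] [] [].
Qed.

Lemma in_median_agree (A B C : {set T}) e q :
  (e \in A) = q -> (e \in B) = q -> (e \in median A B C) = q.
Proof. by rewrite !inE => -> ->; case: q (e \in C) => [] []. Qed.

Lemma majority3 (A B C : {set T}) :
  majority (fun i : 'I_3 => nth set0 [:: A; B; C] i) = median A B C.
Proof.
apply/setP => e; rewrite !inE card_ord -sum1_card big_mkcond.
rewrite !big_ord_recl big_ord0 !inE /=.
by case: (e \in A) (e \in B) (e \in C) => [] [] [].
Qed.

End Majority.

Lemma odd_card_majority (V : finType) (A : {set V}) :
  odd #|V| -> (#|V| < 2 * #|A|) || (#|V| < 2 * #|~: A|).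
Proof.
move=> oddV; have : 2 * #|A| != #|V|.
  by apply: contraTneq oddV => <-; rewrite mul2n odd_double.
by rewrite -(cardsC A); lia.
Qed.

Lemma majorities_meet (V : finType) (A B : {set V}) :
  #|V| < 2 * #|A| -> #|V| < 2 * #|B| -> exists v, v \in A :&: B.
Proof.
move=> majA majB; have cardAB := cardsU A B; have cardU := max_card (A :|: B).
by apply/card_gt0P; lia.
Qed.

Section MedianClosedMajority.

Variables (T V : finType) (X : V -> {set T}) (D : {set {set T}}).
Hypotheses (oddV : odd #|V|) (XD : forall v, X v \in D).
Hypothesis medianD : median_closed D.

Lemma card_agree_majority e :
  #|V| < 2 * #|[set v | (e \in X v) == (e \in majority X)]|.
Proof.
rewrite [e \in majority X]inE.
have [majE|minE] := boolP (#|V| < 2 * #|[set v | e \in X v]|).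
  suff -> : [set v | (e \in X v) == true] = [set v | e \in X v] by [].
  by apply/setP => v; rewrite !inE eqb_id.
have -> : [set v | (e \in X v) == false] = ~: [set v | e \in X v].
  by apply/setP => v; rewrite !inE eqbF_neg.
by move: (odd_card_majority [set v | e \in X v] oddV); rewrite (negbTE minE).
Qed.

Lemma majority_agree_pair a b :
  exists v, (a \in X v) = (a \in majority X) /\ (b \in X v) = (b \in majority X).
Proof.
have [v] := majorities_meet (card_agree_majority a) (card_agree_majority b).
by rewrite !inE => /andP[/eqP agree_a /eqP agree_b]; exists v.
Qed.

Lemma majority_agree_on (s : seq T) :
  exists2 y, y \in D & {in s, forall e, (e \in y) = (e \in majority X)}.
Proof.
elim: {s}(size s).+1 {-2}s (ltnSn (size s)) => // m IH [|a [|b [|c s]]] /= size_s.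
- have [v _] : exists v, v \in V by apply/card_gt0P; case: #|V| oddV.
  by exists (X v).
- have [v [agree_a _]] := majority_agree_pair a a.
  by exists (X v) => // e; rewrite inE => /eqP->.
- have [v [agree_a agree_b]] := majority_agree_pair a b.
  by exists (X v) => // e; rewrite mem_seq2 => /orP[] /eqP->.
have [y1 y1D agree1] := IH (b :: c :: s) size_s.
have [y2 y2D agree2] := IH (a :: c :: s) size_s.
have [y3 y3D agree3] := IH (a :: b :: s) size_s.
exists (median y1 y2 y3); first exact: medianD.
move=> e; rewrite !in_cons => /or4P[/eqP-> | /eqP-> | /eqP-> | es].
- rewrite median_rotate.
  by apply: in_median_agree; [apply: agree2 | apply: agree3]; rewrite !inE eqxx.
- rewrite 2!median_rotate.
  by apply: in_median_agree; [apply: agree3 | apply: agree1]; rewrite !inE eqxx ?orbT.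
- by apply: in_median_agree; [apply: agree1 | apply: agree2]; rewrite !inE eqxx ?orbT.
- by apply: in_median_agree; [apply: agree1 | apply: agree2]; rewrite !inE es !orbT.
Qed.

Lemma median_closed_majority : majority X \in D.
Proof.
have [y yD agree] := majority_agree_on (enum T).
by congr (_ \in D): yD; apply/setP => e; rewrite agree ?mem_enum.
Qed.

End MedianClosedMajority.

Lemma sm_majority n (V : finType) (X : V -> {set {set 'I_n}}) :
  (forall v, X v \subset triples n) -> sm X = majority X.
Proof.
move=> X_triples; apply/setP => A.
rewrite [A \in sm X]inE [A \in majority X]inE.
have [//|notA] := boolP (A \in triples n).
suff -> : [set v | A \in X v] = set0 by rewrite cards0.
by apply/setP => v; rewrite !inE; apply: contraNF notA; apply/subsetP.
Qed.

Theorem mainTheorem8 (n : nat) (D : {set {set {set 'I_n}}}) :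
  3 <= n ->
  (forall T, T \in D -> tiling T) ->
  closed_condorcet_superdomain D <-> median_superdomain D.
Proof.
move=> _ tilingD.
have smD (V : finType) (X : V -> {set {set 'I_n}}) :
    (forall v, X v \in D) -> sm X = majority X.
  by move=> XD; apply: sm_majority => v; case: (tilingD _ (XD v)).
split.
- case=> _ closedD A B C AD BD CD; rewrite -[_ :|: _]majority3 -smD.
    by apply: closedD; [rewrite card_ord | case=> [[|[|[|]]]]].
  by case=> [[|[|[|]]]].
- move=> medianD.
  have closedD (V : finType) (X : V -> {set {set 'I_n}}) :
      odd #|V| -> (forall v, X v \in D) -> sm X \in D.
    by move=> oddV XD; rewrite smD // median_closed_majority.
  by split=> // V X oddV XD; apply/tilingD/closedD.
Qed.
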